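(* Let $(\mathfrak g,[\cdot,\cdot]_{\mathfrak g})$ be a finite-dimensional Lie algebra and suppose its dual space $\mathfrak g^*$ carries a Lie bracket $[\cdot,\cdot]_{\mathfrak g^*}$. Let $E:\mathfrak g\to\mathfrak g$ be linear with dual map $E^*:\mathfrak g^*\to\mathfrak g^*$, and assume that $(\mathfrak g,[\cdot,\cdot]_{\mathfrak g},E)$ and $(\mathfrak g^*,[\cdot,\cdot]_{\mathfrak g^*},E^* )$ are ENL algebras. Then the following are equivalent: (i) $((\mathfrak g,E),(\mathfrak g^*,E^* );\mathrm{ad}^*,\mathfrak{ad}^* )$ is a matched pair of ENL algebras, where $\mathrm{ad}^*$ is the coadjoint action of $\mathfrak g$ on $\mathfrak g^*$ and $\mathfrak{ad}^*$ is the coadjoint action of $\mathfrak g^*$ on $\mathfrak g$; (ii) $((\mathfrak g\oplus\mathfrak g^*,\widehat E,S),(\mathfrak g,E),(\mathfrak g^*,E^* ))$ is a Manin triple of ENL algebras (for a Lie bracket on $\mathfrak g\oplus\mathfrak g^*$), where $\widehat E(x+\xi)=Ex+E^*\xi$ and $S(x+\xi,y+\eta)=\xi(y)+\eta(x)$ for $x,y\in\mathfrak g$, $\xi,\eta\in\mathfrak g^*$.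
   Context: All vector spaces are finite-dimensional over an algebraically closed field of characteristic zero. An ENL algebra $(\mathfrak g,[\cdot,\cdot],E)$ is a Lie algebra with a linear map $E$ satisfying $E[x,y]=[x,Ey]$ for all $x,y$ (equivalently $E\circ\mathrm{ad}_x=\mathrm{ad}_x\circ E$, equivalently $E[x,y]=[Ex,y]$). Coadjoint actions: $\langle\mathrm{ad}^*_x\xi,y\rangle=-\langle\xi,[x,y]_{\mathfrak g}\rangle$ and $\langle\mathfrak{ad}^*_\xi x,\eta\rangle=-\langle x,[\xi,\eta]_{\mathfrak g^*}\rangle$. A matched pair of Lie algebras $(\mathfrak g,\mathfrak h;\rho,\mu)$ consists of Lie algebras $\mathfrak g,\mathfrak h$ and representations $\rho:\mathfrak g\to\mathfrak{gl}(\mathfrak h)$, $\mu:\mathfrak h\to\mathfrak{gl}(\mathfrak g)$ with $\rho(x)[\xi,\eta]_{\mathfrak h}=[\rho(x)\xi,\eta]_{\mathfrak h}+[\xi,\rho(x)\eta]_{\mathfrak h}+\rho(\mu(\eta)x)\xi-\rho(\mu(\xi)x)\eta$ and $\mu(\xi)[x,y]_{\mathfrak g}=[\mu(\xi)x,y]_{\mathfrak g}+[x,\mu(\xi)y]_{\mathfrak g}+\mu(\rho(y)\xi)x-\mu(\rho(x)\xi)y$ for all $x,y\in\mathfrak g,\ \xi,\eta\in\mathfrak h$. For ENL algebras $(\mathfrak g,E)$, $(\mathfrak h,F)$, a matched pair of ENL algebras $((\mathfrak g,E),(\mathfrak h,F);\rho,\mu)$ is a matched pair of Lie algebras $(\mathfrak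 g,\mathfrak h;\rho,\mu)$ with $F(\rho(x)\xi)=\rho(Ex)\xi=\rho(x)(F\xi)$ and $E(\mu(\xi)x)=\mu(F\xi)x=\mu(\xi)(Ex)$ for all $x\in\mathfrak g,\xi\in\mathfrak h$. A quadratic ENL algebra $(\mathcal G,\mathcal E,S)$ is an ENL algebra $(\mathcal G,\mathcal E)$ with a nondegenerate symmetric bilinear form $S$ that is invariant ($S([x,y],z)+S(y,[x,z])=0$) and satisfies $S(\mathcal Ex,y)=S(x,\mathcal Ey)$. A Manin triple of ENL algebras $((\mathcal G,\mathcal E,S),(\mathfrak g,E),(\mathfrak h,F))$ consists of a quadratic ENL algebra $(\mathcal G,\mathcal E,S)$ and ENL algebras $(\mathfrak g,E),(\mathfrak h,F)$ such that $\mathfrak g,\mathfrak h$ are Lie subalgebras of $\mathcal G$ with $\mathcal E|_{\mathfrak g}=E$, $\mathcal E|_{\mathfrak h}=F$, $\mathcal G=\mathfrak g\oplus\mathfrak h$ as vector spaces, and $S(\mathfrak g,\mathfrak g)=0=S(\mathfrak h,\mathfrak h)$. *)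

From mathcomp Require Import all_boot all_algebra.
Set Implicit Arguments. Unset Strict Implicit. Unset Printing Implicit Defensive.
Import GRing.Theory.
Local Open Scope ring_scope.

Section Defs.
Variable K : fieldType.

Definition lin (V W : lmodType K) (f : V -> W) : Prop :=
  forall (a : K) (x y : V), f (a *: x + y) = a *: f x + f y.

Section Generic.
Variable V : lmodType K.

Definition is_lie (br : V -> V -> V) : Prop :=
  [/\ forall x, lin (br x), forall y, lin (br^~ y),
      forall x, br x x = 0 &
      forall x y z, br x (br y z) + br y (br z x) + br z (br x y) = 0].

Definition is_ENL (br : V -> V -> V) (E : V -> V) : Prop :=
  [/\ is_lie br, lin E & forall x y, E (br x y) = br x (E y)].

Definition is_quadratic_ENL (br : V -> V -> V) (E : V -> V) (S : V -> V -> K)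
  : Prop :=
  [/\ is_ENL br E,
      (forall x, lin (S x : V -> K^o)) /\ (forall x y, S x y = S y x),
      (forall x, (forall y, S x y = 0) -> x = 0),
      (forall x y z, S (br x y) z + S y (br x z) = 0) &
      (forall x y, S (E x) y = S x (E y))].
End Generic.

Section Reps.
Variable G H : lmodType K.
Definition is_rep (brG : G -> G -> G) (rho : G -> H -> H) : Prop :=
  [/\ forall x, lin (rho x), forall v, lin (rho^~ v) &
      forall x y v, rho (brG x y) v = rho x (rho y v) - rho y (rho x v)].
End Reps.

Definition matched_pair (g h : lmodType K) (brg : g -> g -> g)
  (brh : h -> h -> h) (rho : g -> h -> h) (mu : h -> g -> g) : Prop :=
  [/\ is_lie brg /\ is_lie brh, is_rep brg rho, is_rep brh mu,
      (forall x xi eta, rho x (brh xi eta) =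
         brh (rho x xi) eta + brh xi (rho x eta)
         + rho (mu eta x) xi - rho (mu xi x) eta) &
      (forall xi x y, mu xi (brg x y) =
         brg (mu xi x) y + brg x (mu xi y)
         + mu (rho y xi) x - mu (rho x xi) y)].

Definition matched_pair_ENL (g h : lmodType K) (brg : g -> g -> g) (E : g -> g)
  (brh : h -> h -> h) (F : h -> h) (rho : g -> h -> h) (mu : h -> g -> g)
  : Prop :=
  [/\ is_ENL brg E, is_ENL brh F, matched_pair brg brh rho mu,
      (forall x xi, F (rho x xi) = rho (E x) xi /\ rho (E x) xi = rho x (F xi)) &
      (forall x xi, E (mu xi x) = mu (F xi) x /\ mu (F xi) x = mu xi (E x))].

(* ---------- g = K^n (row vectors), g^* = K^n with the standard pairing ---------- *)
Variable n : nat.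
Local Notation vec := 'rV[K]_n.

(* <xi, x> = xi(x), for xi in g^*, x in g *)
Definition pairing (xi x : vec) : K := \sum_(i < n) xi 0 i * x 0 i.

Definition basis_vec (i : 'I_n) : vec := delta_mx 0 i.

(* dual map E^* : g^* -> g^*, <E^* xi, x> = <xi, E x> *)
Definition dualmap (E : vec -> vec) (xi : vec) : vec :=
  \row_i pairing xi (E (basis_vec i)).

(* coadjoint action of g on g^*: <ad^*_x xi, y> = - <xi, [x,y]_g> *)
Definition ad_star (brg : vec -> vec -> vec) (x xi : vec) : vec :=
  \row_i (- pairing xi (brg x (basis_vec i))).

(* coadjoint action of g^* on g: <frak_ad^*_xi x, eta> = - <[xi,eta]_{g^*}, x> *)
Definition frak_ad_star (brgs : vec -> vec -> vec) (xi x : vec) : vec :=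
  \row_i (- pairing (brgs xi (basis_vec i)) x).

(* the double g (+) g^*, with elements (x, xi) *)
Definition Ehat (E : vec -> vec) (u : vec * vec) : vec * vec :=
  (E u.1, dualmap E u.2).

Definition Sform (u v : vec * vec) : K := pairing u.2 v.1 + pairing v.2 u.1.

(* Manin triple of ENL algebras ((g (+) g^*, Ehat, S), (g,E), (g^* ,E^* ))
   for the bracket brD on g (+) g^*; g embeds as (x,0), g^* as (0,xi). *)
Definition manin_triple_ENL (brD : vec * vec -> vec * vec -> vec * vec)
  (brg : vec -> vec -> vec) (E : vec -> vec) (brgs : vec -> vec -> vec) : Prop :=
  [/\ is_quadratic_ENL brD (Ehat E) Sform,
      is_ENL brg E /\ is_ENL brgs (dualmap E),
      (forall x y, brD (x, 0) (y, 0) = (brg x y, 0)),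
      (forall xi eta, brD (0, xi) (0, eta) = (0, brgs xi eta)) &
      (forall x xi, Ehat E (x, 0) = (E x, 0) /\ Ehat E (0, xi) = (0, dualmap E xi))].
(* g (+) g^* = g \oplus g^* as vector spaces and S(g,g) = 0 = S(g^*,g^* ) hold
   by construction of the product and of Sform. *)

End Defs.

(* The coadjoint actions ad^* and frak_ad^* are determined by the pairing, so
   they are always representations, and the ENL compatibilities of a matched
   pair follow from the ENL identities of g and g^* alone (using E^** = E).
   A matched pair of ENL algebras thus amounts to the two matched-pair
   compatibility conditions, which are exactly the Jacobi identity of the
   standard bracket on g (+) g^*,
     [x + xi, y + eta] = [x, y] + frak_ad^*_xi y - frak_ad^*_eta x
                         + [xi, eta] + ad^*_x eta - ad^*_y xi.
   This bracket always leaves S invariant and commutes with Ehat; conversely,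
   invariance and nondegeneracy of S force the bracket of any Manin triple on
   g (+) g^* to be the standard one. *)

From mathcomp Require Import all_boot all_algebra.
From mathcomp Require Import ring.
Set Implicit Arguments. Unset Strict Implicit. Unset Printing Implicit Defensive.
Import GRing.Theory.
Local Open Scope ring_scope.

Section Development.
Variable K : fieldType.

Lemma pair_ext (A B : Type) (p q : A * B) : p.1 = q.1 -> p.2 = q.2 -> p = q.
Proof. by case: p q => ? ? [? ?] /= -> ->. Qed.

Section LinearMaps.
Variables (V W : lmodType K) (f : V -> W).
Hypothesis f_lin : lin f.

Lemma lin0 : f 0 = 0.
Proof.
have := f_lin 1 0 0; rewrite !scale1r addr0 => f00.
by apply: (addrI (f 0)); rewrite addr0 -f00.
Qed.

Lemma linD x y : f (x + y) = f x + f y.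
Proof. by rewrite -{1}[x]scale1r f_lin scale1r. Qed.

Lemma linZ a x : f (a *: x) = a *: f x.
Proof. by rewrite -[a *: x]addr0 f_lin lin0 addr0. Qed.

Lemma linN x : f (- x) = - f x.
Proof. by rewrite -scaleN1r linZ scaleN1r. Qed.

Lemma lin_sum m (F : 'I_m -> V) : f (\sum_(i < m) F i) = \sum_(i < m) f (F i).
Proof. by apply: (big_morph f linD lin0). Qed.
End LinearMaps.

Definition is_bilin (U V W : lmodType K) (b : U -> V -> W) : Prop :=
  (forall x, lin (b x)) /\ (forall y, lin (b^~ y)).

Section BilinearMaps.
Variables (U V W : lmodType K) (b : U -> V -> W).
Hypothesis b_bilin : is_bilin b.

Lemma bilinDl x y z : b (x + y) z = b x z + b y z.
Proof. exact: (linD (proj2 b_bilin z) x y). Qed.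
Lemma bilinDr x y z : b x (y + z) = b x y + b x z.
Proof. exact: (linD (proj1 b_bilin x) y z). Qed.
Lemma bilinNl x z : b (- x) z = - b x z.
Proof. exact: (linN (proj2 b_bilin z) x). Qed.
Lemma bilinNr x z : b x (- z) = - b x z.
Proof. exact: (linN (proj1 b_bilin x) z). Qed.
Lemma bilinZl a x z : b (a *: x) z = a *: b x z.
Proof. exact: (linZ (proj2 b_bilin z) a x). Qed.
Lemma bilinZr a x z : b x (a *: z) = a *: b x z.
Proof. exact: (linZ (proj1 b_bilin x) a z). Qed.
Lemma bilin0l z : b 0 z = 0.
Proof. exact: (lin0 (proj2 b_bilin z)). Qed.
Lemma bilin0r x : b x 0 = 0.
Proof. exact: (lin0 (proj1 b_bilin x)). Qed.

Lemma bilin_eq (b' : U -> V -> W) : (forall x y, b x y = b' x y) -> is_bilin b'.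
Proof.
move=> bb'; have [b_linr b_linl] := b_bilin.
by split=> [x | y] a u v; rewrite -!bb'; [apply: b_linr | apply: b_linl].
Qed.
End BilinearMaps.

Ltac bilin_rewrite H :=
  rewrite ?(bilinDl H) ?(bilinDr H) ?(bilinNl H) ?(bilinNr H)
          ?(bilinZl H) ?(bilinZr H) ?(bilin0l H) ?(bilin0r H).

Section LieAlgebras.
Variables (V : lmodType K) (br : V -> V -> V).
Hypothesis br_lie : is_lie br.

Lemma lie_bilin : is_bilin br.
Proof. by case: br_lie. Qed.

Lemma lie_skew x y : br x y = - br y x.
Proof.
have [_ _ br_alt _] := br_lie; apply/eqP; rewrite -addr_eq0.
by have := br_alt (x + y); bilin_rewrite lie_bilin; rewrite !br_alt add0r addr0 => ->.
Qed.

Lemma lie_alt x : br x x = 0.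
Proof. by case: br_lie. Qed.

Lemma lie_jacobi x y z : br x (br y z) + br y (br z x) + br z (br x y) = 0.
Proof. by case: br_lie. Qed.

Lemma lie_ad_bracket x y z : br (br x y) z = br x (br y z) - br y (br x z).
Proof.
move/eqP: (lie_jacobi x y z); rewrite addrC addr_eq0 => /eqP br_zxy.
by rewrite lie_skew br_zxy opprK (lie_skew z x) (bilinNr lie_bilin).
Qed.

Lemma lie_eq (br' : V -> V -> V) : (forall x y, br x y = br' x y) -> is_lie br'.
Proof.
move=> brE; have [br'_linr br'_linl] := bilin_eq lie_bilin brE.
have [_ _ br_alt br_jac] := br_lie.
by split=> // [x | x y z]; rewrite -!brE.
Qed.
End LieAlgebras.

Lemma ENL_bracketl (V : lmodType K) (br : V -> V -> V) (F : V -> V) :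
  is_ENL br F -> forall x y, F (br x y) = br (F x) y.
Proof.
case=> br_lie F_lin F_br x y.
by rewrite lie_skew // (linN F_lin) F_br -lie_skew.
Qed.

Variable n : nat.
Local Notation vec := 'rV[K]_n.
Local Notation e := (basis_vec K).

Lemma pairingC (xi x : vec) : pairing xi x = pairing x xi.
Proof. by apply: eq_bigr => i _; rewrite mulrC. Qed.

Lemma pairing_bilin : is_bilin (fun xi x : vec => pairing xi x : K^o).
Proof.
split=> [xi | x] a u v.
- change (pairing xi (a *: u + v) = a * pairing xi u + pairing xi v).
  by rewrite /pairing mulr_sumr -big_split; apply: eq_bigr => i _; rewrite !mxE mulrDr mulrCA.
- change (pairing (a *: u + v) x = a * pairing u x + pairing v x).
  by rewrite /pairing mulr_sumr -big_split; apply: eq_bigr => i _; rewrite !mxE mulrDl mulrA.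
Qed.

Lemma pairingDl (u v x : vec) : pairing (u + v) x = pairing u x + pairing v x.
Proof. exact: (bilinDl pairing_bilin). Qed.
Lemma pairingDr (xi u v : vec) : pairing xi (u + v) = pairing xi u + pairing xi v.
Proof. exact: (bilinDr pairing_bilin). Qed.
Lemma pairingNl (u x : vec) : pairing (- u) x = - pairing u x.
Proof. exact: (bilinNl pairing_bilin). Qed.
Lemma pairingNr (xi u : vec) : pairing xi (- u) = - pairing xi u.
Proof. exact: (bilinNr pairing_bilin). Qed.
Lemma pairingZl a (u x : vec) : pairing (a *: u) x = a * pairing u x.
Proof. exact: (bilinZl pairing_bilin). Qed.
Lemma pairingZr a (xi u : vec) : pairing xi (a *: u) = a * pairing xi u.
Proof. exact: (bilinZr pairing_bilin). Qed.
Lemma pairing0l (x : vec) : pairing 0 x = 0.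
Proof. exact: (bilin0l pairing_bilin). Qed.
Lemma pairing0r (xi : vec) : pairing xi 0 = 0.
Proof. exact: (bilin0r pairing_bilin). Qed.

Ltac pairing_rewrite :=
  rewrite ?pairingDl ?pairingDr ?pairingNl ?pairingNr
          ?pairingZl ?pairingZr ?pairing0l ?pairing0r.

Lemma pairing_basisr (xi : vec) i : pairing xi (e i) = xi 0 i.
Proof.
rewrite /pairing (bigD1 i) //= big1 => [|j ji]; rewrite mxE.
  by rewrite !eqxx mulr1 addr0.
by rewrite (negbTE ji) mulr0.
Qed.

Lemma pairing_basisl (x : vec) i : pairing (e i) x = x 0 i.
Proof. by rewrite pairingC pairing_basisr. Qed.

Lemma pairing_row (g : vec -> K) :
  (forall a y z, g (a *: y + z) = a * g y + g z) ->
  forall x, pairing (\row_i g (e i)) x = g x.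
Proof.
move=> g_lin x; rewrite {2}(row_sum_delta x) (lin_sum (f := g : vec -> K^o) g_lin).
by apply: eq_bigr => i _; rewrite mxE (linZ (f := g : vec -> K^o) g_lin) mulrC.
Qed.

Lemma dualmap_lin (F : vec -> vec) : lin (dualmap F).
Proof. by move=> a u v; apply/rowP => i; rewrite !mxE; pairing_rewrite. Qed.

Section DualMap.
Variable F : vec -> vec.
Hypothesis F_lin : lin F.

Lemma dualmap_pairing xi x : pairing (dualmap F xi) x = pairing xi (F x).
Proof.
apply: (pairing_row (g := fun y => pairing xi (F y))) => a y z.
by rewrite F_lin; pairing_rewrite.
Qed.

Lemma dualmapK x : dualmap (dualmap F) x = F x.
Proof. by apply/rowP => i; rewrite mxE pairingC dualmap_pairing pairing_basisl. Qed.
End DualMap.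

Section Coadjoint.
Variable br : vec -> vec -> vec.
Hypothesis br_lie : is_lie br.

Lemma ad_star_pairing x xi y : pairing (ad_star br x xi) y = - pairing xi (br x y).
Proof.
apply: (pairing_row (g := fun y => - pairing xi (br x y))) => a u v.
by bilin_rewrite (lie_bilin br_lie); pairing_rewrite; ring.
Qed.

Lemma ad_star_bilin : is_bilin (ad_star br).
Proof.
split=> [x | xi] a u v; apply/rowP => i; rewrite !mxE;
  by bilin_rewrite (lie_bilin br_lie); pairing_rewrite; ring.
Qed.

Lemma ad_star_bracket x y xi :
  ad_star br (br x y) xi = ad_star br x (ad_star br y xi) - ad_star br y (ad_star br x xi).
Proof.
by apply/rowP => i; rewrite !mxE !ad_star_pairing lie_ad_bracket //; pairing_rewrite; ring.
Qed.

Lemma ad_star_rep : is_rep br (ad_star br).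
Proof. by have [? ?] := ad_star_bilin; split=> //; apply: ad_star_bracket. Qed.

Lemma frak_ad_starE xi x : frak_ad_star br xi x = ad_star br xi x.
Proof. by apply/rowP => i; rewrite !mxE pairingC. Qed.

Lemma frak_ad_star_pairing xi x eta :
  pairing eta (frak_ad_star br xi x) = - pairing (br xi eta) x.
Proof. by rewrite frak_ad_starE pairingC ad_star_pairing pairingC. Qed.

Lemma frak_ad_star_bilin : is_bilin (frak_ad_star br).
Proof. by apply: (bilin_eq ad_star_bilin) => xi x; rewrite frak_ad_starE. Qed.

Lemma frak_ad_star_rep : is_rep br (frak_ad_star br).
Proof.
have [? ?] := frak_ad_star_bilin; split=> // xi eta x.
by rewrite !frak_ad_starE ad_star_bracket.
Qed.
End Coadjoint.

Section ENLCoadjoint.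
Variables (br : vec -> vec -> vec) (F : vec -> vec).
Hypothesis br_ENL : is_ENL br F.

Lemma dualmap_ad_star x xi : dualmap F (ad_star br x xi) = ad_star br (F x) xi.
Proof.
have [br_lie _ F_br] := br_ENL.
by apply/rowP => i; rewrite !mxE (ad_star_pairing br_lie) -F_br (ENL_bracketl br_ENL).
Qed.

Lemma ad_star_dualmap x xi : ad_star br x (dualmap F xi) = ad_star br (F x) xi.
Proof.
have [_ F_lin _] := br_ENL.
by apply/rowP => i; rewrite !mxE dualmap_pairing // (ENL_bracketl br_ENL).
Qed.

Lemma dualmap_frak_ad_star xi x :
  dualmap F (frak_ad_star br xi x) = frak_ad_star br (F xi) x.
Proof. by rewrite !frak_ad_starE dualmap_ad_star. Qed.

Lemma frak_ad_star_dualmap xi x :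
  frak_ad_star br xi (dualmap F x) = frak_ad_star br (F xi) x.
Proof. by rewrite !frak_ad_starE ad_star_dualmap. Qed.
End ENLCoadjoint.

Lemma SformC (u v : vec * vec) : Sform u v = Sform v u.
Proof. by rewrite /Sform addrC. Qed.

Lemma Sform_lin (u : vec * vec) : lin (Sform u : vec * vec -> K^o).
Proof.
move=> a v w; change (Sform u (a *: v + w) = a * Sform u v + Sform u w).
by rewrite /Sform /=; pairing_rewrite; ring.
Qed.

Lemma SformNl (u v : vec * vec) : Sform (- u) v = - Sform u v.
Proof. by rewrite /Sform /= pairingNl pairingNr opprD. Qed.

Lemma Sform_basisl (u : vec * vec) i : Sform u (e i, 0) = u.2 0 i.
Proof. by rewrite /Sform /= pairing0l pairing_basisr addr0. Qed.

Lemma Sform_basisr (u : vec * vec) i : Sform u (0, e i) = u.1 0 i.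
Proof. by rewrite /Sform /= pairing0r pairing_basisl add0r. Qed.

Lemma Sform_nondegenerate (u : vec * vec) : (forall v, Sform u v = 0) -> u = 0.
Proof.
move=> Su; apply: pair_ext; apply/rowP => i; rewrite mxE /=.
- by rewrite -Sform_basisr Su.
- by rewrite -Sform_basisl Su.
Qed.

Section DoubleMap.
Variable F : vec -> vec.
Hypothesis F_lin : lin F.

Lemma Ehat_lin : lin (Ehat F).
Proof. by move=> a u v; apply: pair_ext => /=; [apply: F_lin | apply: dualmap_lin]. Qed.

Lemma Sform_Ehat u v : Sform (Ehat F u) v = Sform u (Ehat F v).
Proof. by rewrite /Sform /= !dualmap_pairing. Qed.
End DoubleMap.

Section Double.
Variables brg brgs : vec -> vec -> vec.
Hypotheses (brg_lie : is_lie brg) (brgs_lie : is_lie brgs).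

Local Notation rho := (ad_star brg).
Local Notation mu := (frak_ad_star brgs).

Definition double_bracket (u v : vec * vec) : vec * vec :=
  (brg u.1 v.1 + mu u.2 v.1 - mu v.2 u.1, brgs u.2 v.2 + rho u.1 v.2 - rho v.1 u.2).
Local Notation D := double_bracket.

Ltac expand_brackets :=
  repeat progress (bilin_rewrite (lie_bilin brg_lie); bilin_rewrite (lie_bilin brgs_lie);
    bilin_rewrite (ad_star_bilin brg_lie); bilin_rewrite (frak_ad_star_bilin brgs_lie)).

Ltac by_entries := apply/rowP => i; rewrite !mxE; ring.

Lemma double_bracket_bilin : is_bilin D.
Proof. by split=> [u | v] a w w'; apply: pair_ext => /=; expand_brackets; by_entries. Qed.

Lemma double_bracket_alt u : D u u = 0.
Proof. by apply: pair_ext => /=; rewrite ?lie_alt // add0r subrr. Qed.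

Lemma double_bracket_g x y : D (x, 0) (y, 0) = (brg x y, 0).
Proof. by apply: pair_ext => /=; expand_brackets; by_entries. Qed.

Lemma double_bracket_gs xi eta : D (0, xi) (0, eta) = (0, brgs xi eta).
Proof. by apply: pair_ext => /=; expand_brackets; by_entries. Qed.

Lemma Sform_double_bracket u v w : Sform (D u v) w + Sform v (D u w) = 0.
Proof.
case: u v w => [x xi] [y eta] [z zeta]; rewrite /Sform /=; pairing_rewrite.
rewrite !ad_star_pairing // !frak_ad_star_pairing //.
by rewrite (lie_skew brg_lie z y) (lie_skew brgs_lie zeta eta); pairing_rewrite; ring.
Qed.

Lemma double_bracket_jacobi : matched_pair brg brgs rho mu ->
  forall u v w, D u (D v w) + D v (D w u) + D w (D u v) = 0.
Proof.
case=> _ _ _ rho_compat mu_compat [x xi] [y eta] [z zeta].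
have [_ _ rho_bracket] := ad_star_rep brg_lie.
have [_ _ mu_bracket] := frak_ad_star_rep brgs_lie.
(* Once the compatibility conditions and the representation identities are
   applied, each component of the Jacobiator of D is that of g, resp. g^*. *)
apply: pair_ext => /=; expand_brackets.
- rewrite -[RHS](lie_jacobi brg_lie x y z) !mu_compat !mu_bracket.
  rewrite (lie_skew brg_lie (mu xi y) z) (lie_skew brg_lie (mu eta z) x).
  rewrite (lie_skew brg_lie (mu zeta x) y).
  by_entries.
- rewrite -[RHS](lie_jacobi brgs_lie xi eta zeta) !rho_compat !rho_bracket.
  rewrite (lie_skew brgs_lie (rho x eta) zeta) (lie_skew brgs_lie (rho y zeta) xi).
  rewrite (lie_skew brgs_lie (rho z xi) eta).
  by_entries.
Qed.

Lemma double_bracket_matched_pair : is_lie D -> matched_pair brg brgs rho mu.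
Proof.
move=> D_lie; split; [by [] | exact: ad_star_rep | exact: frak_ad_star_rep | |].
(* On these triples a component of the Jacobiator of D is the defect of a
   compatibility condition. *)
- move=> x xi eta; have /= := congr1 snd (lie_jacobi D_lie (x, 0) (0, xi) (0, eta)).
  expand_brackets => jacobi; apply: subr0_eq; rewrite -[RHS]jacobi.
  by rewrite (lie_skew brgs_lie (rho x xi) eta); by_entries.
- move=> xi x y; have /= := congr1 fst (lie_jacobi D_lie (x, 0) (y, 0) (0, xi)).
  expand_brackets => jacobi; apply: subr0_eq; rewrite -[RHS]jacobi.
  by rewrite (lie_skew brg_lie (mu xi x) y); by_entries.
Qed.

Lemma double_lie_iff_matched_pair : is_lie D <-> matched_pair brg brgs rho mu.
Proof.
split=> [|mp]; first exact: double_bracket_matched_pair.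
have [? ?] := double_bracket_bilin.
by split=> //; [apply: double_bracket_alt | apply: double_bracket_jacobi].
Qed.

Section ENLDouble.
Variable E : vec -> vec.
Hypotheses (brg_ENL : is_ENL brg E) (brgs_ENL : is_ENL brgs (dualmap E)).

Lemma E_frak_ad_star xi x : E (mu xi x) = mu (dualmap E xi) x.
Proof.
have [_ E_lin _] := brg_ENL.
by rewrite -[LHS](dualmapK E_lin) dualmap_frak_ad_star.
Qed.

Lemma frak_ad_star_E xi x : mu xi (E x) = mu (dualmap E xi) x.
Proof.
have [_ E_lin _] := brg_ENL.
by rewrite -[E x](dualmapK E_lin) frak_ad_star_dualmap.
Qed.

Lemma matched_pair_ENL_coadjointE :
  matched_pair_ENL brg E brgs (dualmap E) rho mu <-> matched_pair brg brgs rho mu.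
Proof.
split=> [[] // | mp]; split=> // x xi; split.
- exact: dualmap_ad_star.
- by rewrite ad_star_dualmap.
- exact: E_frak_ad_star.
- by rewrite frak_ad_star_E.
Qed.

Lemma double_bracket_Ehat u v : Ehat E (D u v) = D u (Ehat E v).
Proof.
have [_ E_lin E_brg] := brg_ENL; have [_ Es_lin Es_brgs] := brgs_ENL.
case: u v => [x xi] [y eta]; apply: pair_ext => /=.
- by rewrite !(linD E_lin, linN E_lin) E_brg !E_frak_ad_star frak_ad_star_E.
- rewrite !(linD Es_lin, linN Es_lin) Es_brgs !(dualmap_ad_star brg_ENL).
  by rewrite (ad_star_dualmap brg_ENL).
Qed.

Lemma double_manin_triple : is_lie D -> manin_triple_ENL D brg E brgs.
Proof.
move=> D_lie; have [_ E_lin _] := brg_ENL.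
split=> //.
- split; [split=> // | | exact: Sform_nondegenerate | exact: Sform_double_bracket |].
  + exact: Ehat_lin.
  + exact: double_bracket_Ehat.
  + split; [exact: Sform_lin | exact: SformC].
  + exact: Sform_Ehat.
- exact: double_bracket_g.
- exact: double_bracket_gs.
- by move=> x xi; rewrite /Ehat /= (lin0 E_lin) (lin0 (dualmap_lin E)).
Qed.

Section ManinTriple.
Variable brD : vec * vec -> vec * vec -> vec * vec.
Hypothesis brD_manin : manin_triple_ENL brD brg E brgs.

Lemma manin_mixed_bracket x xi : brD (x, 0) (0, xi) = (- mu xi x, rho x xi).
Proof.
have [[[brD_lie _ _] _ _ S_inv _] _ brD_g brD_gs _] := brD_manin.
have S_invE u v w : Sform (brD u v) w = - Sform v (brD u w).
  by apply/eqP; rewrite -addr_eq0 S_inv.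
(* Coordinates are read off by pairing with basis vectors, and invariance of S
   moves the bracket onto the known brackets of g^* and g. *)
apply: pair_ext; apply/rowP => i /=.
- rewrite -Sform_basisr (lie_skew brD_lie) SformNl S_invE brD_gs opprK.
  by rewrite /Sform /= pairing0l add0r !mxE opprK.
- by rewrite -Sform_basisl S_invE brD_g /Sform /= pairing0l addr0 mxE.
Qed.

Lemma manin_bracketE u v : brD u v = D u v.
Proof.
have [[[brD_lie _ _] _ _ _ _] _ brD_g brD_gs _] := brD_manin.
have split_pair (x xi : vec) : (x, xi) = (x, 0) + (0, xi).
  by apply: pair_ext; rewrite /= ?addr0 ?add0r.
case: u v => [x xi] [y eta]; rewrite {1}(split_pair x xi) {1}(split_pair y eta).
bilin_rewrite (lie_bilin brD_lie).
rewrite brD_g brD_gs (lie_skew brD_lie (0, xi)) !manin_mixed_bracket.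
by apply: pair_ext => /=; expand_brackets; by_entries.
Qed.
End ManinTriple.

Lemma manin_triple_iff_double_lie :
  (exists brD, manin_triple_ENL brD brg E brgs) <-> is_lie D.
Proof.
split=> [[brD brD_manin] | D_lie]; last by exists D; apply: double_manin_triple.
have [[[brD_lie _ _] _ _ _ _] _ _ _ _] := brD_manin.
by apply: (lie_eq brD_lie) => u v; apply: manin_bracketE.
Qed.
End ENLDouble.
End Double.
End Development.

Unset Implicit Arguments.
Set Strict Implicit.

Theorem theorem2p9 (K : closedFieldType) (Kchar0 : [pchar K] =i pred0) (n : nat)
  (brg brgs : 'rV[K]_n -> 'rV[K]_n -> 'rV[K]_n) (E : 'rV[K]_n -> 'rV[K]_n) :
  is_lie brg -> is_lie brgs -> lin E ->
  is_ENL brg E -> is_ENL brgs (dualmap E) ->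
  (matched_pair_ENL brg E brgs (dualmap E) (ad_star brg) (frak_ad_star brgs)
   <-> exists brD : 'rV[K]_n * 'rV[K]_n -> 'rV[K]_n * 'rV[K]_n -> 'rV[K]_n * 'rV[K]_n,
         manin_triple_ENL brD brg E brgs).
Proof.
move=> brg_lie brgs_lie _ brg_ENL brgs_ENL.
apply: iff_trans (matched_pair_ENL_coadjointE brg_ENL brgs_ENL) _.
apply: iff_trans (iff_sym (double_lie_iff_matched_pair brg_lie brgs_lie)) _.
exact: iff_sym (manin_triple_iff_double_lie brg_lie brgs_lie brg_ENL brgs_ENL).
Qed.
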